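(* Let $x=(x_1,x_2,x_3)$ be a triple of distinct points of $\partial H^n_{\mathbb{H}}$, let $\sigma_{12}$ be the real geodesic and $\Sigma_{12}$ the quaternionic line containing $x_1,x_2$ (at infinity), and let $\Pi:\overline{H^n_{\mathbb{H}}}\to\overline{\Sigma_{12}}$ be the orthogonal projection (extended continuously to ideal points). Then $$|\tan\mathbb{A}_{\mathbb{H}}(x)|=\sinh\big(d(\Pi(x_3),\sigma_{12})\big),$$ where $d$ is the hyperbolic distance in $H^n_{\mathbb{H}}$ (both sides being $+\infty$ when $\Pi(x_3)\in\partial\Sigma_{12}$).
   Context: Quaternionic hyperbolic space $H^n_{\mathbb{H}}$ is the set of negative lines in the left $\mathbb{H}$-vector space $\mathbb{H}^{n+1}$ with form $\langle z,w\rangle=\sum_{i=1}^n z_i\bar w_i-z_{n+1}\bar w_{n+1}$, $\partial H^n_{\mathbb{H}}$ the null lines; the metric is normalized so that sectional curvature lies in $[-1,-1/4]$, so each quaternionic line is isometric to real hyperbolic 4-space of curvature $-1$. For distinct points with lifts $\tilde x_i$, the triple product is $\langle\tilde x_1,\tilde x_2\rangle\langle\tilde x_2,\tilde x_3\rangle\langle\tilde x_3,\tilde x_1\rangle\in\mathbb{H}$, and $\mathbb{A}_{\mathbb{H}}(x)\in[0,\pi/2]$ is the angle in $\mathbb{H}\cong\mathbb{R}^4$ between $\mathbb{R}\cdot 1$ and this triple product. The orthogonal projection onto $\Sigma_{12}$ maps each point to its nearest point of $\Sigma_{12}$. *)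

From Stdlib Require Import Reals.
From Coquelicot Require Import Coquelicot.
Open Scope R_scope.

(** * Quaternions H = R^4, basis 1, i, j, k with ij = k. *)
Record quat := Quat { qre : R; qi : R; qj : R; qk : R }.

Definition qzero : quat := Quat 0 0 0 0.
Definition qadd (a b : quat) : quat :=
  Quat (qre a + qre b) (qi a + qi b) (qj a + qj b) (qk a + qk b).
Definition qsub (a b : quat) : quat :=
  Quat (qre a - qre b) (qi a - qi b) (qj a - qj b) (qk a - qk b).
Definition qmul (a b : quat) : quat :=
  Quat (qre a * qre b - qi a * qi b - qj a * qj b - qk a * qk b)
       (qre a * qi b + qi a * qre b + qj a * qk b - qk a * qj b)
       (qre a * qj b - qi a * qk b + qj a * qre b + qk a * qi b)
       (qre a * qk b + qi a * qj b - qj a * qi b + qk a * qre b).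
Definition qconj (a : quat) : quat := Quat (qre a) (- qi a) (- qj a) (- qk a).
Definition qnorm2 (a : quat) : R :=
  qre a * qre a + qi a * qi a + qj a * qj a + qk a * qk a.
Definition qreal (a : quat) : Prop := qi a = 0 /\ qj a = 0 /\ qk a = 0.

(** A vector z = (z_1, ..., z_{n+1}) is a function nat -> quat whose
    coordinate z_m (1 <= m <= n+1) is stored at index m-1; indices > n
    are irrelevant. Scalars act on the left. *)
Definition qvec := nat -> quat.

Fixpoint qsum (m : nat) (f : nat -> quat) : quat :=
  match m with O => qzero | S m' => qadd (qsum m' f) (f m') end.

Definition herm (n : nat) (z w : qvec) : quat :=
  qsub (qsum n (fun i => qmul (z i) (qconj (w i))))
       (qmul (z n) (qconj (w n))).

Definition lincomb (a : quat) (x : qvec) (b : quat) (y : qvec) : qvec :=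
  fun i => qadd (qmul a (x i)) (qmul b (y i)).

Definition vnonzero (n : nat) (z : qvec) : Prop := exists i, (i <= n)%nat /\ z i <> qzero.

Definition same_line (n : nat) (z w : qvec) : Prop :=
  exists l : quat, l <> qzero /\ forall i, (i <= n)%nat -> w i = qmul l (z i).

(** negative vectors (lifts of points of H^n_H) and null vectors
    (lifts of points of the boundary) *)
Definition negvec (n : nat) (z : qvec) : Prop := qre (herm n z z) < 0.
Definition nullvec (n : nat) (z : qvec) : Prop :=
  vnonzero n z /\ herm n z z = qzero.

(** hyperbolic distance, normalised so that the sectional curvature lies
    in [-1,-1/4]:  cosh^2 (d(z,w)/2) = |<z,w>|^2 / (<z,z><w,w>) *)
Definition qacosh (c : R) : R := ln (c + sqrt (c * c - 1)).
Definition hdist (n : nat) (z w : qvec) : R :=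
  2 * qacosh (sqrt (qnorm2 (herm n z w) /
                    (qre (herm n z z) * qre (herm n w w)))).

Definition in_Sigma (n : nat) (x1 x2 z : qvec) : Prop :=
  negvec n z /\ exists a b : quat, same_line n (lincomb a x1 b x2) z.

(** sigma12: the real geodesic with endpoints x1, x2, i.e. the
    projectivisation of { a x1 + b x2 } with <a x1, b x2> = a <x1,x2> conj(b)
    real and negative (lifts of x1,x2 normalised to have real negative
    product, real positive coefficients). *)
Definition in_sigma (n : nat) (x1 x2 z : qvec) : Prop :=
  negvec n z /\
  exists a b : quat,
    same_line n (lincomb a x1 b x2) z /\
    qreal (qmul (qmul a (herm n x1 x2)) (qconj b)) /\
    qre (qmul (qmul a (herm n x1 x2)) (qconj b)) < 0.

Definition dist_to_sigma (n : nat) (x1 x2 p : qvec) : R :=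
  real (Glb_Rbar (fun r => exists q, in_sigma n x1 x2 q /\ r = hdist n p q)).

(** orthogonal projection onto Sigma12 of an interior point y:
    p is the nearest point of Sigma12 to y *)
Definition nearest_in_Sigma (n : nat) (x1 x2 y p : qvec) : Prop :=
  in_Sigma n x1 x2 p /\
  forall q, in_Sigma n x1 x2 q -> hdist n y p <= hdist n y q.

(** convergence of interior points y_k to the ideal point x3 in the
    closure of H^n_H (topology of quaternionic projective space):
    there are lifts of the y_k converging coordinatewise to x3 *)
Definition conv_to (n : nat) (y : nat -> qvec) (x : qvec) : Prop :=
  exists u : nat -> qvec,
    (forall k, same_line n (y k) (u k)) /\
    forall i, (i <= n)%nat ->
      is_lim_seq (fun k => qre (u k i)) (qre (x i)) /\
      is_lim_seq (fun k => qi (u k i)) (qi (x i)) /\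
      is_lim_seq (fun k => qj (u k i)) (qj (x i)) /\
      is_lim_seq (fun k => qk (u k i)) (qk (x i)).

(** triple product and quaternionic angular invariant A_H(x) in [0, pi/2]:
    the angle in H = R^4 between the line R.1 and the triple product *)
Definition triple (n : nat) (x1 x2 x3 : qvec) : quat :=
  qmul (qmul (herm n x1 x2) (herm n x2 x3)) (herm n x3 x1).
Definition angleH (n : nat) (x1 x2 x3 : qvec) : R :=
  let T := triple n x1 x2 x3 in acos (Rabs (qre T) / sqrt (qnorm2 T)).

Definition abs_tan_angleH (n : nat) (x1 x2 x3 : qvec) : Rbar :=
  let A := angleH n x1 x2 x3 in
  if Req_dec_T A (PI / 2) then p_infty else Finite (Rabs (tan A)).

From Stdlib Require Import Reals Lra Psatz Lia FunctionalExtensionality.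
From Coquelicot Require Import Coquelicot.
Open Scope R_scope.

(* Rescale the lift of x2 so that <x1,x2> = -1. Every point of Sigma12 is then
   A x1 + B x2; it is negative iff Re(A conj B) > 0, and sigma12 consists of the points
   with A conj B real and positive. Minimising cosh^2 (d/2) over sigma12 is an AM-GM
   inequality, giving sinh d(A x1 + B x2, sigma12) = |tan| of the Euclidean angle between
   A and B in H = R^4. Since the form has signature (n,1), the projection of y onto
   Sigma12 is, up to a quaternionic scalar, -<y,x2> x1 - <y,x1> x2, so
   sinh d(Pi(y), sigma12) is the |tan| of the angle between <y,x2> and <y,x1>. As y -> x3
   this tends to the |tan| of the angle between <x3,x2> and <x3,x1>, which is A_H(x)
   because the triple product is -conj<x3,x2> <x3,x1>; when that angle is pi/2 the
   tangent tends to +oo. *)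

Definition qofR (r : R) : quat := Quat r 0 0 0.
Definition qone : quat := qofR 1.
Definition qopp (a : quat) : quat := Quat (- qre a) (- qi a) (- qj a) (- qk a).
Definition qinv (a : quat) : quat := qmul (qofR (/ qnorm2 a)) (qconj a).
Definition qdot (a b : quat) : R := qre (qmul a (qconj b)).

Lemma quat_ext (a b : quat) :
  qre a = qre b -> qi a = qi b -> qj a = qj b -> qk a = qk b -> a = b.
Proof. destruct a, b; simpl; intros; subst; reflexivity. Qed.

Ltac qunfold :=
  unfold qone, qopp, qdot, qmul, qadd, qsub, qconj, qzero, qnorm2, qofR in *;
  cbn [qre qi qj qk] in *.
Ltac qring := apply quat_ext; qunfold; ring.

Lemma qmul_assoc a b c : qmul a (qmul b c) = qmul (qmul a b) c.
Proof. qring. Qed.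
Lemma qmul_1l a : qmul qone a = a.
Proof. qring. Qed.
Lemma qmul_1r a : qmul a qone = a.
Proof. qring. Qed.
Lemma qconj_sub a b : qconj (qsub a b) = qsub (qconj a) (qconj b).
Proof. qring. Qed.
Lemma qnorm2_mul a b : qnorm2 (qmul a b) = qnorm2 a * qnorm2 b.
Proof. qunfold; ring. Qed.
Lemma qnorm2_conj a : qnorm2 (qconj a) = qnorm2 a.
Proof. qunfold; ring. Qed.
Lemma qnorm2_ge0 a : 0 <= qnorm2 a.
Proof. qunfold; nra. Qed.
Lemma qnorm2_eq0 a : qnorm2 a = 0 -> a = qzero.
Proof. destruct a; qunfold; intro; apply quat_ext; cbn; nra. Qed.
Lemma qnorm2_pos a : a <> qzero -> 0 < qnorm2 a.
Proof.
  intro Ha; destruct (qnorm2_ge0 a) as [|E]; auto.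
  now contradict Ha; apply qnorm2_eq0.
Qed.
Lemma qmul_inv_l a : a <> qzero -> qmul (qinv a) a = qone.
Proof.
  intro Ha; pose proof (qnorm2_pos a Ha); unfold qinv.
  destruct a; apply quat_ext; qunfold; field; lra.
Qed.
Lemma qmul_inv_r a : a <> qzero -> qmul a (qinv a) = qone.
Proof.
  intro Ha; pose proof (qnorm2_pos a Ha); unfold qinv.
  destruct a; apply quat_ext; qunfold; field; lra.
Qed.
Lemma qmul_neq0 a b : a <> qzero -> b <> qzero -> qmul a b <> qzero.
Proof.
  intros Ha Hb E; pose proof (qnorm2_pos a Ha); pose proof (qnorm2_pos b Hb).
  assert (qnorm2 (qmul a b) = 0) by (rewrite E; qunfold; ring).
  rewrite qnorm2_mul in *; nra.
Qed.
Lemma qconj_neq0 a : a <> qzero -> qconj a <> qzero.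
Proof.
  intros Ha E; pose proof (qnorm2_pos a Ha) as Hpos.
  rewrite <- qnorm2_conj, E in Hpos; qunfold; lra.
Qed.

Lemma qofR_neq0 r : r <> 0 -> qofR r <> qzero.
Proof. intros Hr E; apply Hr, (f_equal qre E). Qed.

Lemma qinv_neq0 a : a <> qzero -> qinv a <> qzero.
Proof.
  intros Ha E; pose proof (qmul_inv_l a Ha) as H1; rewrite E in H1.
  apply (f_equal qre) in H1; qunfold; lra.
Qed.
Lemma qmul_inv_cancel_r a b : a <> qzero -> qmul (qmul b (qinv a)) a = b.
Proof. intro Ha; rewrite <- qmul_assoc, qmul_inv_l, qmul_1r; auto. Qed.

(* |tan| of the Euclidean angle between A and B in R^4; when qdot A B = 0 the division
   by zero makes it 0 rather than +oo. *)
Definition qtan_angle (A B : quat) : R :=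
  sqrt (qnorm2 A * qnorm2 B - qdot A B ^ 2) / Rabs (qdot A B).

Lemma qdot_sq_le A B : qdot A B * qdot A B <= qnorm2 A * qnorm2 B.
Proof.
  unfold qdot; rewrite <- (qnorm2_conj B), <- qnorm2_mul.
  generalize (qmul A (qconj B)); intro w; qunfold; nra.
Qed.

Lemma qdot_neq0_l A B : qdot A B <> 0 -> A <> qzero.
Proof. intros H ->; apply H; qunfold; ring. Qed.
Lemma qdot_neq0_r A B : qdot A B <> 0 -> B <> qzero.
Proof. intros H ->; apply H; qunfold; ring. Qed.

Lemma qsandwich_real l w : qi w = 0 -> qj w = 0 -> qk w = 0 ->
  qmul (qmul l w) (qconj l) = qofR (qnorm2 l * qre w).
Proof. destruct w as [w0 w1 w2 w3]; cbn; intros -> -> ->; qring. Qed.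

Lemma qmul_conj_swap_real s t tau :
  qmul s (qconj t) = qofR tau -> qmul (qconj t) s = qofR tau.
Proof.
  intros Hst.
  assert (Hre : qre (qmul (qconj t) s) = tau)
    by (transitivity (qre (qmul s (qconj t))); [qunfold; ring | rewrite Hst; reflexivity]).
  assert (Hn : qnorm2 (qmul (qconj t) s) = tau * tau)
    by (rewrite qnorm2_mul, qnorm2_conj, Rmult_comm, <- (qnorm2_conj t), <- qnorm2_mul, Hst;
        qunfold; ring).
  revert Hre Hn; generalize (qmul (qconj t) s); intros [u0 u1 u2 u3]; qunfold; intros Hre Hn.
  apply quat_ext; cbn; nra.
Qed.

Lemma qdot_scale l A B : qdot (qmul l A) (qmul l B) = qnorm2 l * qdot A B.
Proof. qunfold; ring. Qed.

Lemma qtan_angle_scale l A B : l <> qzero -> qtan_angle (qmul l A) (qmul l B) = qtan_angle A B.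
Proof.
  intro Hl; pose proof (qnorm2_pos l Hl); unfold qtan_angle.
  rewrite qdot_scale, !qnorm2_mul, Rabs_mult, (Rabs_pos_eq (qnorm2 l)) by lra.
  replace (qnorm2 l * qnorm2 A * (qnorm2 l * qnorm2 B) - (qnorm2 l * qdot A B) ^ 2)
    with ((qnorm2 l * qnorm2 l) * (qnorm2 A * qnorm2 B - qdot A B ^ 2)) by ring.
  destruct (Req_dec (qdot A B) 0) as [E0|E0].
  - rewrite E0, Rabs_R0, Rmult_0_r; unfold Rdiv; rewrite Rinv_0, !Rmult_0_r; reflexivity.
  - rewrite sqrt_mult_alt, sqrt_square by nra; field; split; [apply Rabs_no_R0|]; lra.
Qed.

Definition qcos_angle (A B : quat) : R := Rabs (qdot A B) / sqrt (qnorm2 A * qnorm2 B).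

Lemma qcos_angle_bounds A B : A <> qzero -> B <> qzero -> 0 <= qcos_angle A B <= 1.
Proof.
  intros HA HB; pose proof (qnorm2_pos A HA); pose proof (qnorm2_pos B HB).
  assert (HS : 0 < sqrt (qnorm2 A * qnorm2 B)) by (apply sqrt_lt_R0; nra).
  unfold qcos_angle; split.
  - apply Rdiv_le_0_compat; [apply Rabs_pos | lra].
  - apply Rcomplements.Rle_div_l; [lra|]; rewrite Rmult_1_l, <- sqrt_Rsqr_abs.
    apply sqrt_le_1_alt; unfold Rsqr; apply qdot_sq_le.
Qed.

Lemma acos_qcos_angle_PI2 A B : A <> qzero -> B <> qzero ->
  acos (qcos_angle A B) = PI / 2 <-> qdot A B = 0.
Proof.
  intros HA HB; pose proof (qcos_angle_bounds A B HA HB) as Hc; split.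
  - intro E; apply (f_equal cos) in E; rewrite cos_acos, cos_PI2 in E by lra.
    destruct (Req_dec (qdot A B) 0) as [|Hne]; auto.
    assert (0 < qcos_angle A B); [|lra].
    apply Rdiv_lt_0_compat; [apply Rabs_pos_lt; auto|].
    apply sqrt_lt_R0; pose proof (qnorm2_pos A HA); pose proof (qnorm2_pos B HB); nra.
  - intro E; unfold qcos_angle; rewrite E, Rabs_R0; unfold Rdiv; rewrite Rmult_0_l; apply acos_0.
Qed.

Lemma abs_tan_acos_qcos_angle A B : A <> qzero -> B <> qzero -> qdot A B <> 0 ->
  Rabs (tan (acos (qcos_angle A B))) = qtan_angle A B.
Proof.
  intros HA HB Hd; pose proof (qnorm2_pos A HA); pose proof (qnorm2_pos B HB).
  set (S := sqrt (qnorm2 A * qnorm2 B)).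
  assert (HS : 0 < S) by (apply sqrt_lt_R0; nra).
  assert (HSS : S * S = qnorm2 A * qnorm2 B) by (apply sqrt_sqrt; nra).
  assert (Hr : 0 < Rabs (qdot A B)) by (apply Rabs_pos_lt; auto).
  pose proof (qcos_angle_bounds A B HA HB) as Hc.
  assert (Hc0 : 0 < qcos_angle A B) by (apply Rdiv_lt_0_compat; auto).
  rewrite tan_acos by lra; unfold qtan_angle.
  replace (qdot A B ^ 2) with (Rabs (qdot A B) * Rabs (qdot A B))
    by (rewrite <- Rabs_mult, Rabs_pos_eq by nra; ring).
  replace (qnorm2 A * qnorm2 B - Rabs (qdot A B) * Rabs (qdot A B))
    with (S * S * (1 - qcos_angle A B * qcos_angle A B))
    by (unfold qcos_angle; fold S; rewrite <- HSS; field; lra).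
  rewrite sqrt_mult_alt, sqrt_square by nra.
  rewrite Rabs_pos_eq by (apply Rdiv_le_0_compat; [apply sqrt_pos | lra]).
  unfold Rsqr, qcos_angle; fold S; field; lra.
Qed.

Definition qconv (u : nat -> quat) (a : quat) : Prop :=
  is_lim_seq (fun k => qre (u k)) (qre a) /\ is_lim_seq (fun k => qi (u k)) (qi a) /\
  is_lim_seq (fun k => qj (u k)) (qj a) /\ is_lim_seq (fun k => qk (u k)) (qk a).

Lemma is_lim_seq_opp' (u : nat -> R) (l : R) :
  is_lim_seq u l -> is_lim_seq (fun k => - u k) (- l).
Proof. intro H; exact (proj1 (is_lim_seq_opp u l) H). Qed.

Ltac lim_poly :=
  repeat match goal with
  | |- is_lim_seq (fun _ => _ - _) _ => apply is_lim_seq_minus'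
  | |- is_lim_seq (fun _ => _ + _) _ => apply is_lim_seq_plus'
  | |- is_lim_seq (fun _ => _ * _) _ => apply is_lim_seq_mult'
  | |- is_lim_seq (fun _ => - _) _ => apply is_lim_seq_opp'
  | |- is_lim_seq (fun _ => ?c) _ => apply is_lim_seq_const
  | |- _ => assumption
  end.

Lemma qconv_const a : qconv (fun _ => a) a.
Proof. repeat split; apply is_lim_seq_const. Qed.

Lemma qconv_add u v a b :
  qconv u a -> qconv v b -> qconv (fun k => qadd (u k) (v k)) (qadd a b).
Proof.
  intros (?&?&?&?) (?&?&?&?); unfold qconv, qadd; cbn [qre qi qj qk]; repeat split; lim_poly.
Qed.

Lemma qconv_sub u v a b :
  qconv u a -> qconv v b -> qconv (fun k => qsub (u k) (v k)) (qsub a b).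
Proof.
  intros (?&?&?&?) (?&?&?&?); unfold qconv, qsub; cbn [qre qi qj qk]; repeat split; lim_poly.
Qed.

Lemma qconv_mul u v a b :
  qconv u a -> qconv v b -> qconv (fun k => qmul (u k) (v k)) (qmul a b).
Proof.
  intros (?&?&?&?) (?&?&?&?); unfold qconv, qmul; cbn [qre qi qj qk]; repeat split; lim_poly.
Qed.

Lemma qconv_conj u a : qconv u a -> qconv (fun k => qconj (u k)) (qconj a).
Proof. intros (?&?&?&?); unfold qconv, qconj; cbn [qre qi qj qk]; repeat split; lim_poly. Qed.

Lemma qconv_qsum m (f : nat -> nat -> quat) (g : nat -> quat) :
  (forall i, (i < m)%nat -> qconv (fun k => f k i) (g i)) ->
  qconv (fun k => qsum m (f k)) (qsum m g).
Proof.
  induction m as [|m IH]; intros Hf; simpl; [apply qconv_const|].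
  apply qconv_add; [apply IH; intros|]; apply Hf; lia.
Qed.

Lemma qconv_herm_l n (u : nat -> qvec) z w :
  (forall i, (i <= n)%nat -> qconv (fun k => u k i) (z i)) ->
  qconv (fun k => herm n (u k) w) (herm n z w).
Proof.
  intros Hu; unfold herm; apply qconv_sub.
  - apply (qconv_qsum n (fun k i => qmul (u k i) (qconj (w i)))); intros.
    apply qconv_mul; [apply Hu; lia | apply qconv_const].
  - apply qconv_mul; [apply Hu; lia | apply qconv_const].
Qed.

Lemma is_lim_seq_qdot u v a b :
  qconv u a -> qconv v b -> is_lim_seq (fun k => qdot (u k) (v k)) (qdot a b).
Proof. intros Hu Hv; apply (qconv_mul _ _ _ _ Hu (qconv_conj v b Hv)). Qed.

Lemma is_lim_seq_qnorm2 u a : qconv u a -> is_lim_seq (fun k => qnorm2 (u k)) (qnorm2 a).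
Proof. intros (?&?&?&?); unfold qnorm2; lim_poly. Qed.

Lemma is_lim_seq_qtan_angle_num u v a b : qconv u a -> qconv v b ->
  is_lim_seq (fun k => sqrt (qnorm2 (u k) * qnorm2 (v k) - qdot (u k) (v k) ^ 2))
             (sqrt (qnorm2 a * qnorm2 b - qdot a b ^ 2)).
Proof.
  intros Hu Hv.
  apply (is_lim_seq_continuous sqrt (fun k => qnorm2 (u k) * qnorm2 (v k) - qdot (u k) (v k) ^ 2)).
  - apply continuity_pt_sqrt; pose proof (qdot_sq_le a b); simpl; lra.
  - pose proof (is_lim_seq_qnorm2 u a Hu); pose proof (is_lim_seq_qnorm2 v b Hv).
    pose proof (is_lim_seq_qdot u v a b Hu Hv); simpl; lim_poly.
Qed.

Lemma is_lim_seq_qtan_angle u v a b : qconv u a -> qconv v b -> qdot a b <> 0 ->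
  is_lim_seq (fun k => qtan_angle (u k) (v k)) (qtan_angle a b).
Proof.
  intros Hu Hv Hd; unfold qtan_angle.
  apply is_lim_seq_div'; [apply is_lim_seq_qtan_angle_num; auto | | apply Rabs_no_R0; auto].
  apply (is_lim_seq_abs _ (qdot a b)), is_lim_seq_qdot; auto.
Qed.

Lemma is_lim_seq_qtan_angle_p_infty u v a b :
  qconv u a -> qconv v b -> a <> qzero -> b <> qzero -> qdot a b = 0 ->
  (forall k, qdot (u k) (v k) <> 0) ->
  is_lim_seq (fun k => qtan_angle (u k) (v k)) p_infty.
Proof.
  intros Hu Hv Ha Hb Hd Hnz.
  set (w := fun k => Rabs (qdot (u k) (v k))).
  assert (Hw0 : is_lim_seq w 0).
  { unfold w; rewrite <- Rabs_R0, <- Hd.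
    apply (is_lim_seq_abs _ (qdot a b)), is_lim_seq_qdot; auto. }
  assert (Hright : filterlim w eventually (at_right 0)).
  { intros P HP; destruct (Hw0 _ HP) as [N HN]; exists N; intros k Hk.
    apply HN; auto; apply Rabs_pos_lt, Hnz. }
  apply (is_lim_seq_mult _ (fun k => / w k) (sqrt (qnorm2 a * qnorm2 b - qdot a b ^ 2)) p_infty).
  - apply is_lim_seq_qtan_angle_num; auto.
  - exact (filterlim_comp _ _ _ w Rinv eventually (at_right 0) _ Hright filterlim_Rinv_0_right).
  - apply is_Rbar_mult_sym, is_Rbar_mult_p_infty_pos; rewrite Hd.
    apply sqrt_lt_R0; pose proof (qnorm2_pos a Ha); pose proof (qnorm2_pos b Hb); nra.
Qed.

Lemma is_lim_seq_qtan_angle_acos u v a b :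
  qconv u a -> qconv v b -> a <> qzero -> b <> qzero -> (forall k, qdot (u k) (v k) <> 0) ->
  is_lim_seq (fun k => qtan_angle (u k) (v k))
    (let t := acos (qcos_angle a b) in
     if Req_dec_T t (PI / 2) then p_infty else Finite (Rabs (tan t))).
Proof.
  intros Hu Hv Ha Hb Hnz; cbv zeta.
  destruct (Req_dec_T _ (PI / 2)) as [E|E].
  - apply (is_lim_seq_qtan_angle_p_infty u v a b); auto.
    apply acos_qcos_angle_PI2; auto.
  - assert (Hd : qdot a b <> 0) by (contradict E; apply acos_qcos_angle_PI2; auto).
    rewrite abs_tan_acos_qcos_angle by auto; apply is_lim_seq_qtan_angle; auto.
Qed.

Lemma qsum_ext m f g :
  (forall i, (i < m)%nat -> f i = g i) -> qsum m f = qsum m g.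
Proof.
  induction m as [|m IH]; simpl; intros Hfg; auto.
  f_equal; [apply IH; intros|]; apply Hfg; lia.
Qed.
Lemma qsum_add m f g :
  qsum m (fun i => qadd (f i) (g i)) = qadd (qsum m f) (qsum m g).
Proof. induction m as [|m IH]; simpl; [|rewrite IH]; qring. Qed.
Lemma qsum_mull m a f : qsum m (fun i => qmul a (f i)) = qmul a (qsum m f).
Proof. induction m as [|m IH]; simpl; [|rewrite IH]; qring. Qed.
Lemma qsum_conj m f : qconj (qsum m f) = qsum m (fun i => qconj (f i)).
Proof. induction m as [|m IH]; simpl; [|rewrite <- IH]; qring. Qed.
Lemma qsum_re_ge0 m f :
  (forall i, (i < m)%nat -> 0 <= qre (f i)) -> 0 <= qre (qsum m f).
Proof.
  induction m as [|m IH]; simpl; intros Hf; [lra|].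
  pose proof (Hf m ltac:(lia)); pose proof (IH ltac:(intros; apply Hf; lia)); lra.
Qed.
Lemma qsum_re_eq0 m f :
  (forall i, (i < m)%nat -> 0 <= qre (f i)) -> qre (qsum m f) = 0 ->
  forall i, (i < m)%nat -> qre (f i) = 0.
Proof.
  induction m as [|m IH]; simpl; intros Hf H0 i Hi; [lia|].
  pose proof (Hf m ltac:(lia)).
  pose proof (qsum_re_ge0 m f ltac:(intros; apply Hf; lia)).
  destruct (Nat.eq_dec i m) as [->|]; [lra|].
  apply IH; [intros; apply Hf; lia | lra | lia].
Qed.

Definition coord_eq (n : nat) (z w : qvec) : Prop := forall i, (i <= n)%nat -> z i = w i.
Definition qvscale (l : quat) (z : qvec) : qvec := fun i => qmul l (z i).

Lemma herm_ext n z z' w w' :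
  coord_eq n z z' -> coord_eq n w w' -> herm n z w = herm n z' w'.
Proof.
  intros Hz Hw; unfold herm.
  rewrite (qsum_ext n _ (fun i => qmul (z' i) (qconj (w' i))))
    by (intros; rewrite Hz, Hw by lia; reflexivity).
  rewrite Hz, Hw by lia; reflexivity.
Qed.
Lemma coord_eq_refl n z : coord_eq n z z.
Proof. intros i _; reflexivity. Qed.

Lemma herm_sym n z w : herm n w z = qconj (herm n z w).
Proof.
  unfold herm; rewrite qconj_sub, qsum_conj.
  rewrite (qsum_ext n (fun i => qconj _) (fun i => qmul (w i) (qconj (z i))))
    by (intros; qring).
  qring.
Qed.
Lemma herm_lincomb_l n a x b y w :
  herm n (lincomb a x b y) w = qadd (qmul a (herm n x w)) (qmul b (herm n y w)).
Proof.
  unfold herm, lincomb.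
  rewrite (qsum_ext n _ (fun i => qadd (qmul a (qmul (x i) (qconj (w i))))
                                      (qmul b (qmul (y i) (qconj (w i))))))
    by (intros; qring).
  rewrite qsum_add, !qsum_mull; qring.
Qed.
Lemma herm_lincomb_r n a x b y w :
  herm n w (lincomb a x b y) = qadd (qmul (herm n w x) (qconj a)) (qmul (herm n w y) (qconj b)).
Proof. rewrite herm_sym, herm_lincomb_l, (herm_sym n w x), (herm_sym n w y); qring. Qed.
Lemma herm_scale_l n l z w : herm n (qvscale l z) w = qmul l (herm n z w).
Proof.
  rewrite (herm_ext n _ (lincomb l z qzero z) w w), herm_lincomb_l
    by (apply coord_eq_refl || (intros i _; unfold qvscale, lincomb; qring)).
  qring.
Qed.
Lemma herm_scale_r n l z w : herm n w (qvscale l z) = qmul (herm n w z) (qconj l).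
Proof. rewrite herm_sym, herm_scale_l, (herm_sym n w z); qring. Qed.
Lemma herm_same_line n y u : same_line n y u ->
  exists nu, nu <> qzero /\ forall w, herm n u w = qmul nu (herm n y w).
Proof.
  intros [nu [Hnu Hu]]; exists nu; split; auto; intro w.
  rewrite <- herm_scale_l; apply herm_ext; [intros i Hi; apply Hu; auto | apply coord_eq_refl].
Qed.

Lemma herm_self_real n z : herm n z z = qofR (qre (herm n z z)).
Proof.
  pose proof (f_equal qi (herm_sym n z z)); pose proof (f_equal qj (herm_sym n z z)).
  pose proof (f_equal qk (herm_sym n z z)).
  apply quat_ext; qunfold; lra.
Qed.

Lemma herm_last0_psd n z : z n = qzero ->
  0 <= qre (herm n z z) /\ (qre (herm n z z) = 0 -> coord_eq n z (fun _ => qzero)).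
Proof.
  intros Hz; unfold herm; rewrite Hz.
  assert (Hnorm : forall i, qre (qmul (z i) (qconj (z i))) = qnorm2 (z i))
    by (intros; qunfold; ring).
  assert (Hge0 : forall i, (i < n)%nat -> 0 <= qre (qmul (z i) (qconj (z i))))
    by (intros; rewrite Hnorm; apply qnorm2_ge0).
  pose proof (qsum_re_ge0 n _ Hge0).
  split; [qunfold; lra|].
  intros H0 i Hi; destruct (Nat.eq_dec i n) as [->|]; auto.
  apply qnorm2_eq0; rewrite <- Hnorm.
  apply (qsum_re_eq0 n _ Hge0); [qunfold; lra | lia].
Qed.

Lemma negvec_last n e : negvec n e -> e n <> qzero.
Proof. intros He E; destruct (herm_last0_psd n e E); unfold negvec in He; lra. Qed.

Lemma nullvec_last n x : nullvec n x -> x n <> qzero.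
Proof.
  intros [[i [Hi Hxi]] Hxx] E; apply Hxi.
  apply (proj2 (herm_last0_psd n x E)); auto; rewrite Hxx; reflexivity.
Qed.

(* The form has signature (n,1): it is positive definite on the orthogonal
   complement of a negative vector. *)
Lemma herm_perp_negvec n e c : negvec n e -> herm n c e = qzero ->
  0 <= qre (herm n c c) /\ (qre (herm n c c) = 0 -> coord_eq n c (fun _ => qzero)).
Proof.
  intros He Hce; pose proof (negvec_last n e He) as Hen.
  set (mu := qmul (c n) (qinv (e n))).
  set (u := lincomb qone c (qopp mu) e).
  assert (Hun : u n = qzero).
  { unfold u, lincomb, mu.
    replace (qmul (qopp (qmul (c n) (qinv (e n)))) (e n))
      with (qopp (qmul (qmul (c n) (qinv (e n))) (e n))) by qring.
    rewrite qmul_inv_cancel_r by auto; qring. }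
  assert (Hec : herm n e c = qzero) by (rewrite herm_sym, Hce; qring).
  assert (Huu : qre (herm n u u) = qre (herm n c c) + qnorm2 mu * qre (herm n e e)).
  { unfold u; rewrite herm_lincomb_l, !herm_lincomb_r, Hce, Hec, (herm_self_real n e).
    qunfold; ring. }
  destruct (herm_last0_psd n u Hun) as [Hu0 Hu].
  unfold negvec in He; pose proof (qnorm2_ge0 mu).
  split; [nra|].
  intros Hcc i Hi.
  assert (Hmu : mu = qzero) by (apply qnorm2_eq0; nra).
  replace (c i) with (u i) by (unfold u, lincomb; rewrite Hmu; qring).
  apply Hu; auto; nra.
Qed.

Lemma nullvec_orth_same_line n x y :
  nullvec n x -> nullvec n y -> herm n x y = qzero -> same_line n x y.
Proof.
  intros Hx Hy Hxy.
  pose proof (nullvec_last n x Hx) as Hxn; pose proof (nullvec_last n y Hy) as Hyn.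
  set (d := lincomb (qinv (x n)) x (qopp (qinv (y n))) y).
  assert (Hdn : d n = qzero).
  { unfold d, lincomb; rewrite qmul_inv_l by auto.
    replace (qmul (qopp (qinv (y n))) (y n)) with (qopp (qmul (qinv (y n)) (y n))) by qring.
    rewrite qmul_inv_l by auto; qring. }
  assert (Hdd : herm n d d = qzero).
  { unfold d; generalize (qinv (x n)) (qopp (qinv (y n))); intros a b.
    rewrite herm_lincomb_l, !herm_lincomb_r, Hxy, (herm_sym n x y), Hxy.
    destruct Hx as [_ ->]; destruct Hy as [_ ->]; qring. }
  assert (Hd0 : coord_eq n d (fun _ => qzero))
    by (apply (herm_last0_psd n d Hdn); rewrite Hdd; reflexivity).
  exists (qmul (y n) (qinv (x n))); split.
  - apply qmul_neq0; auto; apply qinv_neq0; auto.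
  - intros i Hi; specialize (Hd0 i Hi); unfold d, lincomb in Hd0.
    replace (y i) with (qmul (y n) (qmul (qinv (y n)) (y i)))
      by (rewrite qmul_assoc, qmul_inv_r, qmul_1l; auto).
    replace (qmul (qinv (y n)) (y i)) with (qmul (qinv (x n)) (x i)); [qring|].
    apply quat_ext; apply (f_equal qre) in Hd0 as ?; apply (f_equal qi) in Hd0 as ?;
      apply (f_equal qj) in Hd0 as ?; apply (f_equal qk) in Hd0 as ?; qunfold; lra.
Qed.

(* [r] plays the role of cosh^2 (d/2). *)
Definition dist_of_cosh2 (r : R) : R := 2 * qacosh (sqrt r).

Lemma hdist_eq n z w : hdist n z w =
  dist_of_cosh2 (qnorm2 (herm n z w) / (qre (herm n z z) * qre (herm n w w))).
Proof. reflexivity. Qed.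

Lemma hdist_coord_eq n z z' w w' :
  coord_eq n z z' -> coord_eq n w w' -> hdist n z w = hdist n z' w'.
Proof.
  intros Hz Hw; unfold hdist.
  rewrite (herm_ext n z z' w w' Hz Hw), (herm_ext n z z' z z' Hz Hz), (herm_ext n w w' w w' Hw Hw).
  reflexivity.
Qed.

Lemma sqrt_ge1 r : 1 <= r -> 1 <= sqrt r.
Proof. intro H; rewrite <- sqrt_1; apply sqrt_le_1; lra. Qed.

Lemma dist_of_cosh2_lt r1 r2 : 1 <= r1 -> r1 < r2 -> dist_of_cosh2 r1 < dist_of_cosh2 r2.
Proof.
  intros H1 H2; unfold dist_of_cosh2, qacosh.
  apply Rmult_lt_compat_l; [lra|].
  set (s1 := sqrt r1); set (s2 := sqrt r2).
  assert (Hs1 : 1 <= s1) by (apply sqrt_ge1; lra).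
  assert (Hs : s1 < s2) by (apply sqrt_lt_1; lra).
  assert (sqrt (s1 * s1 - 1) <= sqrt (s2 * s2 - 1)) by (apply sqrt_le_1_alt; nra).
  pose proof (sqrt_pos (s1 * s1 - 1)).
  apply ln_increasing; lra.
Qed.

Lemma dist_of_cosh2_le r1 r2 : 1 <= r1 -> r1 <= r2 -> dist_of_cosh2 r1 <= dist_of_cosh2 r2.
Proof. intros H1 [H2|<-]; [left; apply dist_of_cosh2_lt|]; lra. Qed.

Lemma dist_of_cosh2_le_inv r1 r2 :
  1 <= r2 -> dist_of_cosh2 r1 <= dist_of_cosh2 r2 -> r1 <= r2.
Proof.
  intros H2 Hd; destruct (Rle_lt_dec r1 r2) as [|Hlt]; auto.
  pose proof (dist_of_cosh2_lt r2 r1 H2 Hlt); lra.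
Qed.

Lemma sinh_dist_of_cosh2 r : 1 <= r -> sinh (dist_of_cosh2 r) = 2 * sqrt r * sqrt (r - 1).
Proof.
  intro Hr; unfold dist_of_cosh2, qacosh, sinh.
  set (s := sqrt r); assert (Hs : s * s = r) by (apply sqrt_sqrt; lra).
  assert (Hs1 : 1 <= s) by (apply sqrt_ge1; auto).
  replace (s * s - 1) with (r - 1) by lra.
  set (t := sqrt (r - 1)); assert (Ht : t * t = r - 1) by (apply sqrt_sqrt; lra).
  assert (Ht0 : 0 <= t) by apply sqrt_pos.
  replace (2 * ln (s + t)) with (ln (s + t) + ln (s + t)) by ring.
  rewrite exp_Ropp, exp_plus, exp_ln by lra.
  replace (/ ((s + t) * (s + t))) with ((s - t) * (s - t)) by (field_simplify_eq; nra).
  nra.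
Qed.

Lemma sinh_dist_of_cosh2_ratio m rh : 0 < rh <= m ->
  sinh (dist_of_cosh2 ((m + rh) / (2 * rh))) = sqrt (m * m - rh * rh) / rh.
Proof.
  intros Hm; set (r := (m + rh) / (2 * rh)).
  assert (Hr : 1 <= r) by (unfold r; apply Rcomplements.Rle_div_r; lra).
  rewrite sinh_dist_of_cosh2, Rmult_assoc, <- sqrt_mult by lra.
  replace (r * (r - 1)) with ((m * m - rh * rh) / (2 * rh) ^ 2) by (unfold r; field; lra).
  rewrite sqrt_div_alt, sqrt_pow2 by nra; field; lra.
Qed.

Lemma two_mul_le_add_of_prod X Y c :
  0 <= X -> 0 <= Y -> 0 <= c -> X * Y = c * c -> 2 * c <= X + Y.
Proof.
  intros HX HY Hc Hprod.
  assert (E : (X + Y) * (X + Y) = (X - Y) * (X - Y) + 2 * c * (2 * c))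
    by (replace (2 * c * (2 * c)) with (4 * (X * Y)) by (rewrite Hprod; ring); ring).
  destruct (Rle_lt_dec (2 * c) (X + Y)) as [|Hlt]; auto.
  assert ((X + Y) * (X + Y) < 2 * c * (2 * c)) by (apply Rmult_le_0_lt_compat; lra).
  pose proof (Rle_0_sqr (X - Y)); unfold Rsqr in *; lra.
Qed.

Lemma cosh2_cmp_resid_eq0 P Y Q Rr M :
  P < 0 -> Y < 0 -> Q < 0 -> P <= Y -> 0 <= Rr -> Q = Rr + M * P ->
  dist_of_cosh2 (M * (P * P) / (Y * Q)) <= dist_of_cosh2 (P * P / (Y * P)) -> Rr = 0.
Proof.
  intros HP HY HQ HPY HR HQdef Hd.
  apply dist_of_cosh2_le_inv in Hd;
    [| replace (P * P / (Y * P)) with ((- P) / (- Y)) by (field; lra);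
       apply Rcomplements.Rle_div_r; lra].
  assert (Hdiff : M * (P * P) / (Y * Q) - P * P / (Y * P) = - P * Rr / (Y * Q)).
  { replace (M * (P * P)) with (P * (Q - Rr)) by (rewrite HQdef; ring); field; lra. }
  destruct HR as [HR|]; auto.
  assert (0 < - P * Rr / (Y * Q)) by (apply Rdiv_lt_0_compat; nra); lra.
Qed.

(* cosh^2 (d/2) for the distance from A x1 + B x2 to sigma12, see dist_to_sigma_frame. *)
Definition cosh2_to_sigma (A B : quat) : R :=
  (sqrt (qnorm2 A * qnorm2 B) + qdot A B) / (2 * qdot A B).

Lemma qdot_le_sqrt A B : qdot A B <= sqrt (qnorm2 A * qnorm2 B).
Proof.
  destruct (Rle_lt_dec (qdot A B) 0) as [|Hpos].
  - pose proof (sqrt_pos (qnorm2 A * qnorm2 B)); lra.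
  - rewrite <- (sqrt_square (qdot A B)) by lra; apply sqrt_le_1_alt, qdot_sq_le.
Qed.

Lemma cosh2_to_sigma_ge1 A B : 0 < qdot A B -> 1 <= cosh2_to_sigma A B.
Proof.
  intros Hrh; pose proof (qdot_le_sqrt A B).
  unfold cosh2_to_sigma; apply Rcomplements.Rle_div_r; lra.
Qed.

Lemma sinh_dist_of_cosh2_to_sigma A B : 0 < qdot A B ->
  sinh (dist_of_cosh2 (cosh2_to_sigma A B)) = qtan_angle A B.
Proof.
  intros Hrh; pose proof (qdot_le_sqrt A B); pose proof (qdot_sq_le A B).
  assert (Hm : sqrt (qnorm2 A * qnorm2 B) * sqrt (qnorm2 A * qnorm2 B) = qnorm2 A * qnorm2 B)
    by (apply sqrt_sqrt; nra).
  unfold cosh2_to_sigma; rewrite sinh_dist_of_cosh2_ratio, Hm by lra; unfold qtan_angle.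
  rewrite Rabs_pos_eq by lra; do 3 f_equal; ring.
Qed.

Lemma cosh2_to_sigma_le A B s t tau : 0 < qdot A B -> qmul s (qconj t) = qofR tau -> 0 < tau ->
  cosh2_to_sigma A B <=
  (qnorm2 A * qnorm2 t + qnorm2 B * qnorm2 s + 2 * tau * qdot A B) / (4 * qdot A B * tau).
Proof.
  intros Hrh Hst Htau.
  set (m := sqrt (qnorm2 A * qnorm2 B)).
  assert (Hm : m * m = qnorm2 A * qnorm2 B)
    by (apply sqrt_sqrt; pose proof (qnorm2_ge0 A); pose proof (qnorm2_ge0 B); nra).
  assert (Hst2 : qnorm2 s * qnorm2 t = tau * tau)
    by (rewrite <- (qnorm2_conj t), <- qnorm2_mul, Hst; qunfold; ring).
  assert (Hamgm : 2 * (m * tau) <= qnorm2 A * qnorm2 t + qnorm2 B * qnorm2 s).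
  { apply two_mul_le_add_of_prod.
    - pose proof (qnorm2_ge0 A); pose proof (qnorm2_ge0 t); nra.
    - pose proof (qnorm2_ge0 B); pose proof (qnorm2_ge0 s); nra.
    - pose proof (sqrt_pos (qnorm2 A * qnorm2 B)); unfold m; nra.
    - transitivity ((m * m) * (qnorm2 s * qnorm2 t)); [rewrite Hm|rewrite Hst2]; ring. }
  apply Rle_trans with ((2 * (m * tau) + 2 * tau * qdot A B) / (4 * qdot A B * tau)).
  - right; unfold cosh2_to_sigma, m; field; lra.
  - apply Rmult_le_compat_r; [left; apply Rinv_0_lt_compat; nra | lra].
Qed.

Section NullFrame.

Variables (n : nat) (x1 x2 : qvec).
Hypothesis x1_null : herm n x1 x1 = qzero.
Hypothesis x2_null : herm n x2 x2 = qzero.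
Hypothesis herm_x1_x2 : herm n x1 x2 = qofR (-1).

Lemma herm_frame_x1 A B : herm n (lincomb A x1 B x2) x1 = qopp B.
Proof. rewrite herm_lincomb_l, x1_null, (herm_sym n x1 x2), herm_x1_x2; qring. Qed.

Lemma herm_frame_x2 A B : herm n (lincomb A x1 B x2) x2 = qopp A.
Proof. rewrite herm_lincomb_l, x2_null, herm_x1_x2; qring. Qed.

Lemma herm_frame A B C D :
  herm n (lincomb A x1 B x2) (lincomb C x1 D x2) =
  qopp (qadd (qmul A (qconj D)) (qmul B (qconj C))).
Proof. rewrite herm_lincomb_r, herm_frame_x1, herm_frame_x2; qring. Qed.

Lemma herm_frame_self A B :
  qre (herm n (lincomb A x1 B x2) (lincomb A x1 B x2)) = -2 * qdot A B.
Proof. rewrite herm_frame; qunfold; ring. Qed.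

Lemma in_Sigma_frame z : in_Sigma n x1 x2 z ->
  exists A B, coord_eq n z (lincomb A x1 B x2).
Proof.
  intros [_ [a [b [l [_ Hz]]]]]; exists (qmul l a), (qmul l b).
  intros i Hi; rewrite Hz by auto; unfold lincomb; qring.
Qed.

Lemma in_sigma_frame q : in_sigma n x1 x2 q ->
  exists s t tau, coord_eq n q (lincomb s x1 t x2) /\ qmul s (qconj t) = qofR tau /\ 0 < tau.
Proof.
  intros [_ [a [b [[l [Hl Hq]] [Hreal Hneg]]]]].
  set (w := qmul a (qconj b)).
  assert (Hw : qmul (qmul a (herm n x1 x2)) (qconj b) = qopp w)
    by (rewrite herm_x1_x2; unfold w; qring).
  rewrite Hw in Hreal, Hneg; destruct Hreal as (Hi & Hj & Hk).
  unfold qopp in *; cbn [qre qi qj qk] in *.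
  exists (qmul l a), (qmul l b), (qnorm2 l * qre w); repeat split.
  - intros i Hi'; rewrite Hq by auto; unfold lincomb; qring.
  - replace (qmul (qmul l a) (qconj (qmul l b))) with (qmul (qmul l w) (qconj l))
      by (unfold w; qring).
    apply qsandwich_real; lra.
  - pose proof (qnorm2_pos l Hl); nra.
Qed.

Lemma cosh2_frame A B s t tau : qmul s (qconj t) = qofR tau ->
  qnorm2 (herm n (lincomb A x1 B x2) (lincomb s x1 t x2)) /
    (qre (herm n (lincomb A x1 B x2) (lincomb A x1 B x2)) *
     qre (herm n (lincomb s x1 t x2) (lincomb s x1 t x2))) =
  (qnorm2 A * qnorm2 t + qnorm2 B * qnorm2 s + 2 * tau * qdot A B) / (4 * qdot A B * tau).
Proof.
  intros Hst; rewrite herm_frame, !herm_frame_self.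
  assert (Hdot : qdot s t = tau) by (unfold qdot; rewrite Hst; reflexivity).
  pose proof (qmul_conj_swap_real s t tau Hst) as Hts.
  replace (qnorm2 (qopp (qadd (qmul A (qconj t)) (qmul B (qconj s)))))
    with (qnorm2 A * qnorm2 t + qnorm2 B * qnorm2 s +
          2 * qre (qmul (qmul A (qmul (qconj t) s)) (qconj B)))
    by (qunfold; ring).
  rewrite Hts, Hdot; f_equal; [qunfold; ring | ring].
Qed.

Lemma negvec_frame_qdot_pos A B z : negvec n z -> coord_eq n z (lincomb A x1 B x2) ->
  0 < qdot A B.
Proof.
  unfold negvec; intros Hz Hcoord.
  rewrite (herm_ext n z _ z _ Hcoord Hcoord), herm_frame_self in Hz; lra.
Qed.

Lemma hdist_sigma_frame_ge A B z q : negvec n z -> coord_eq n z (lincomb A x1 B x2) ->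
  in_sigma n x1 x2 q -> dist_of_cosh2 (cosh2_to_sigma A B) <= hdist n z q.
Proof.
  intros Hz Hcoord Hq; pose proof (negvec_frame_qdot_pos A B z Hz Hcoord) as Hrh.
  destruct (in_sigma_frame q Hq) as (s & t & tau & Hqcoord & Hst & Htau).
  rewrite (hdist_coord_eq n z _ q _ Hcoord Hqcoord), hdist_eq, (cosh2_frame A B s t tau Hst).
  apply dist_of_cosh2_le; [apply cosh2_to_sigma_ge1 | apply cosh2_to_sigma_le]; auto.
Qed.

(* The minimum is attained at the point of coordinates (1, |B|/|A|). *)
Lemma hdist_sigma_frame_attained A B z : negvec n z -> coord_eq n z (lincomb A x1 B x2) ->
  exists q, in_sigma n x1 x2 q /\ hdist n z q = dist_of_cosh2 (cosh2_to_sigma A B).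
Proof.
  intros Hz Hcoord; pose proof (negvec_frame_qdot_pos A B z Hz Hcoord) as Hrh.
  assert (HA : 0 < qnorm2 A) by (apply qnorm2_pos, (qdot_neq0_l A B); lra).
  assert (HB : 0 < qnorm2 B) by (apply qnorm2_pos, (qdot_neq0_r A B); lra).
  set (a := sqrt (qnorm2 A)); set (b := sqrt (qnorm2 B)).
  assert (Ha : a * a = qnorm2 A) by (apply sqrt_sqrt; lra).
  assert (Hb : b * b = qnorm2 B) by (apply sqrt_sqrt; lra).
  assert (Ha0 : 0 < a) by (apply sqrt_lt_R0; lra).
  assert (Hb0 : 0 < b) by (apply sqrt_lt_R0; lra).
  set (k := b / a); assert (Hk : 0 < k) by (apply Rdiv_lt_0_compat; lra).
  exists (lincomb qone x1 (qofR k) x2); split.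
  - split; [unfold negvec; rewrite herm_frame_self; qunfold; nra|].
    exists qone, (qofR k); rewrite herm_x1_x2; repeat split; try (qunfold; lra).
    exists qone; split; [apply qofR_neq0; lra|].
    intros i _; rewrite qmul_1l; reflexivity.
  - rewrite (hdist_coord_eq n z _ _ _ Hcoord (coord_eq_refl n _)), hdist_eq.
    rewrite (cosh2_frame A B qone (qofR k) k) by qring.
    replace (qnorm2 (qofR k)) with (k * k) by (qunfold; ring).
    replace (qnorm2 qone) with 1 by (qunfold; ring).
    f_equal; unfold cosh2_to_sigma, k; rewrite sqrt_mult by lra; fold a b.
    rewrite <- Ha, <- Hb.
    field; lra.
Qed.

Lemma dist_to_sigma_frame A B z : negvec n z -> coord_eq n z (lincomb A x1 B x2) ->
  dist_to_sigma n x1 x2 z = dist_of_cosh2 (cosh2_to_sigma A B).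
Proof.
  intros Hz Hcoord; destruct (hdist_sigma_frame_attained A B z Hz Hcoord) as [q0 [Hq0 Hval]].
  unfold dist_to_sigma.
  rewrite (is_glb_Rbar_unique _ (Finite (dist_of_cosh2 (cosh2_to_sigma A B)))); [reflexivity|].
  split.
  - intros r [q [Hq ->]]; apply (hdist_sigma_frame_ge A B z q); auto.
  - intros l Hl; rewrite <- Hval; apply Hl; exists q0; auto.
Qed.

Lemma sinh_dist_to_sigma_frame A B z : negvec n z -> coord_eq n z (lincomb A x1 B x2) ->
  sinh (dist_to_sigma n x1 x2 z) = qtan_angle A B.
Proof.
  intros Hz Hcoord; rewrite (dist_to_sigma_frame A B z Hz Hcoord).
  apply sinh_dist_of_cosh2_to_sigma, (negvec_frame_qdot_pos A B z Hz Hcoord).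
Qed.

Definition frame_proj (y : qvec) : qvec :=
  lincomb (qopp (herm n y x2)) x1 (qopp (herm n y x1)) x2.

Definition frame_resid (y : qvec) : qvec := lincomb qone y (qopp qone) (frame_proj y).

Lemma herm_frame_proj_x1 y : herm n (frame_proj y) x1 = herm n y x1.
Proof. unfold frame_proj; rewrite herm_frame_x1; qring. Qed.

Lemma herm_frame_proj_x2 y : herm n (frame_proj y) x2 = herm n y x2.
Proof. unfold frame_proj; rewrite herm_frame_x2; qring. Qed.

Lemma herm_frame_resid y a b : herm n (frame_resid y) (lincomb a x1 b x2) = qzero.
Proof.
  unfold frame_resid; rewrite herm_lincomb_r, !(herm_lincomb_l n qone y (qopp qone)).
  rewrite herm_frame_proj_x1, herm_frame_proj_x2; qring.
Qed.

Lemma frame_proj_resid y : coord_eq n y (lincomb qone (frame_proj y) qone (frame_resid y)).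
Proof. intros i _; unfold frame_resid, lincomb; qring. Qed.

Lemma herm_frame_proj_l y w a b : coord_eq n w (lincomb a x1 b x2) ->
  herm n y w = herm n (frame_proj y) w.
Proof.
  intros Hw.
  rewrite (herm_ext n y _ w w (frame_proj_resid y) (coord_eq_refl n w)), herm_lincomb_l.
  rewrite (herm_ext n (frame_resid y) _ w _ (coord_eq_refl n _) Hw), herm_frame_resid; qring.
Qed.

Lemma herm_self_frame_proj_le y :
  qre (herm n (frame_proj y) (frame_proj y)) <= qre (herm n y y).
Proof.
  assert (He : negvec n (lincomb qone x1 qone x2))
    by (unfold negvec; rewrite herm_frame_self; qunfold; lra).
  destruct (herm_perp_negvec n _ (frame_resid y) He (herm_frame_resid y qone qone)) as [Hc _].
  assert (Hcp : herm n (frame_resid y) (frame_proj y) = qzero) by apply herm_frame_resid.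
  assert (Hpc : herm n (frame_proj y) (frame_resid y) = qzero) by (rewrite herm_sym, Hcp; qring).
  rewrite (herm_ext n y _ y _ (frame_proj_resid y) (frame_proj_resid y)).
  rewrite herm_lincomb_l, !herm_lincomb_r, Hcp, Hpc.
  revert Hc; qunfold; lra.
Qed.

Lemma negvec_frame_proj y : negvec n y -> negvec n (frame_proj y).
Proof. unfold negvec; pose proof (herm_self_frame_proj_le y); lra. Qed.

Lemma qdot_herm_frame_pos y : negvec n y -> 0 < qdot (herm n y x2) (herm n y x1).
Proof.
  intros Hy; pose proof (negvec_frame_proj y Hy) as Hp.
  unfold negvec, frame_proj in Hp; rewrite herm_frame_self in Hp.
  revert Hp; unfold qdot; qunfold; lra.
Qed.

Lemma in_Sigma_frame_proj y : negvec n y -> in_Sigma n x1 x2 (frame_proj y).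
Proof.
  intros Hy; split; [apply negvec_frame_proj; auto|].
  exists (qopp (herm n y x2)), (qopp (herm n y x1)), qone; split.
  - apply qofR_neq0; lra.
  - intros i _; rewrite qmul_1l; reflexivity.
Qed.

(* Writing p = r + mu py with r orthogonal to py, cosh^2 (d(y,p)/2) exceeds
   cosh^2 (d(y,py)/2) by a positive multiple of <r,r> >= 0, so minimality forces r = 0. *)
Lemma nearest_in_Sigma_frame_proj y p : negvec n y -> nearest_in_Sigma n x1 x2 y p ->
  exists mu, mu <> qzero /\ coord_eq n p (qvscale mu (frame_proj y)).
Proof.
  intros Hy [Hp Hmin].
  set (py := frame_proj y).
  pose proof (negvec_frame_proj y Hy) as HP; fold py in HP.
  specialize (Hmin py (in_Sigma_frame_proj y Hy)).
  destruct (in_Sigma_frame p Hp) as [a [b Hpab]].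
  set (P := qre (herm n py py)) in *; set (Y := qre (herm n y y)); set (Q := qre (herm n p p)).
  assert (HP0 : P < 0) by exact HP; assert (HY0 : Y < 0) by exact Hy.
  assert (HPY : P <= Y) by apply herm_self_frame_proj_le.
  assert (HQ0 : Q < 0) by (destruct Hp as [Hp' _]; exact Hp').
  set (mu := qmul (herm n p py) (qofR (/ P))).
  set (r := lincomb qone p (qopp mu) py).
  assert (Hrpy : herm n r py = qzero).
  { unfold r, mu; rewrite herm_lincomb_l, (herm_self_real n py); fold P.
    apply quat_ext; qunfold; field; lra. }
  destruct (herm_perp_negvec n py r HP Hrpy) as [HR HR0].
  set (Rr := qre (herm n r r)) in *.
  assert (Hpr : coord_eq n p (lincomb qone r mu py)) by (intros i _; unfold r, lincomb; qring).
  assert (HQ : Q = Rr + qnorm2 mu * P).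
  { unfold Q; rewrite (herm_ext n p _ p _ Hpr Hpr), herm_lincomb_l, !herm_lincomb_r, Hrpy.
    rewrite (herm_sym n r py), Hrpy, (herm_self_real n py); fold P; unfold Rr; qunfold; ring. }
  assert (Hyp : qnorm2 (herm n y p) = qnorm2 mu * (P * P)).
  { rewrite (herm_frame_proj_l y p a b Hpab), herm_sym, qnorm2_conj; fold py.
    replace (herm n p py) with (qmul mu (qofR P))
      by (unfold mu; apply quat_ext; qunfold; field; lra).
    rewrite qnorm2_mul; qunfold; ring. }
  assert (Hypi : qnorm2 (herm n y py) = P * P).
  { rewrite (herm_frame_proj_l y py _ _ (coord_eq_refl n py)); fold py.
    rewrite (herm_self_real n py); fold P.
    qunfold; ring. }
  rewrite !hdist_eq, Hyp, Hypi in Hmin; fold Y Q P in Hmin.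
  pose proof (cosh2_cmp_resid_eq0 P Y Q Rr (qnorm2 mu) HP0 HY0 HQ0 HPY HR HQ Hmin) as HRr.
  exists mu; split.
  - intro E; rewrite E in HQ; unfold qnorm2, qzero in HQ; cbn [qre qi qj qk] in HQ; lra.
  - intros i Hi; rewrite (Hpr i Hi); unfold lincomb; rewrite (HR0 HRr i Hi); unfold qvscale; qring.
Qed.

Lemma sinh_dist_nearest y p : negvec n y -> nearest_in_Sigma n x1 x2 y p ->
  sinh (dist_to_sigma n x1 x2 p) = qtan_angle (herm n y x2) (herm n y x1).
Proof.
  intros Hy Hp.
  destruct (nearest_in_Sigma_frame_proj y p Hy Hp) as [mu [Hmu Hpmu]].
  set (l := qmul mu (qofR (-1))).
  assert (Hl : l <> qzero).
  { apply qmul_neq0; auto; apply qofR_neq0; lra. }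
  assert (Hcoord : coord_eq n p (lincomb (qmul l (herm n y x2)) x1 (qmul l (herm n y x1)) x2)).
  { intros i Hi; rewrite Hpmu by auto; unfold qvscale, frame_proj, lincomb, l; qring. }
  rewrite (sinh_dist_to_sigma_frame _ _ p (proj1 (proj1 Hp)) Hcoord).
  apply qtan_angle_scale; auto.
Qed.

Lemma angleH_frame x3 :
  angleH n x1 x2 x3 = acos (qcos_angle (herm n x3 x2) (herm n x3 x1)).
Proof.
  unfold angleH, triple, qcos_angle; rewrite herm_x1_x2, (herm_sym n x2 x3).
  do 2 f_equal.
  - rewrite <- Rabs_Ropp; f_equal; qunfold; ring.
  - f_equal; rewrite !qnorm2_mul, qnorm2_conj; unfold qnorm2 at 1, qofR; cbn [qre qi qj qk]; ring.
Qed.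

Lemma is_lim_seq_sinh_dist_nearest x3 (y p : nat -> qvec) :
  herm n x3 x2 <> qzero -> herm n x3 x1 <> qzero ->
  (forall k, negvec n (y k)) -> conv_to n y x3 ->
  (forall k, nearest_in_Sigma n x1 x2 (y k) (p k)) ->
  is_lim_seq (fun k => sinh (dist_to_sigma n x1 x2 (p k))) (abs_tan_angleH n x1 x2 x3).
Proof.
  intros Ha Hb Hy [u [Hyu Hu]] Hp.
  assert (Hk : forall k, sinh (dist_to_sigma n x1 x2 (p k)) =
                         qtan_angle (herm n (u k) x2) (herm n (u k) x1) /\
                         0 < qdot (herm n (u k) x2) (herm n (u k) x1)).
  { intro k; destruct (herm_same_line n _ _ (Hyu k)) as [nu [Hnu Hnuw]].
    rewrite !Hnuw, qtan_angle_scale, qdot_scale by auto.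
    split; [apply sinh_dist_nearest; auto|].
    pose proof (qnorm2_pos nu Hnu); pose proof (qdot_herm_frame_pos (y k) (Hy k)); nra. }
  assert (Hconv : forall w, qconv (fun k => herm n (u k) w) (herm n x3 w))
    by (intro w; apply qconv_herm_l; intros i Hi; apply Hu; auto).
  eapply is_lim_seq_ext; [intro k; symmetry; apply Hk|].
  unfold abs_tan_angleH; rewrite angleH_frame.
  apply is_lim_seq_qtan_angle_acos; auto; intro k; apply Rgt_not_eq, Hk.
Qed.
End NullFrame.

Lemma lincomb_scale_r a x b g y :
  lincomb a x b (qvscale g y) = lincomb a x (qmul b g) y.
Proof. apply functional_extensionality; intro i; unfold lincomb, qvscale; qring. Qed.

Lemma in_Sigma_scale_r n x1 x2 g z : g <> qzero ->
  in_Sigma n x1 (qvscale g x2) z <-> in_Sigma n x1 x2 z.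
Proof.
  intros Hg; unfold in_Sigma; split; intros [Hz [a [b Hs]]]; split; auto.
  - exists a, (qmul b g); rewrite <- lincomb_scale_r; auto.
  - exists a, (qmul b (qinv g)); rewrite lincomb_scale_r, qmul_inv_cancel_r; auto.
Qed.

Lemma in_sigma_scale_r n x1 x2 g z : g <> qzero ->
  in_sigma n x1 (qvscale g x2) z <-> in_sigma n x1 x2 z.
Proof.
  intros Hg.
  assert (Hh : forall a b, qmul (qmul a (herm n x1 (qvscale g x2))) (qconj b) =
                           qmul (qmul a (herm n x1 x2)) (qconj (qmul b g)))
    by (intros; rewrite herm_scale_r; qring).
  unfold in_sigma; split; intros [Hz [a [b Hs]]]; split; auto.
  - exists a, (qmul b g); rewrite <- lincomb_scale_r, <- Hh; auto.
  - exists a, (qmul b (qinv g)); rewrite lincomb_scale_r, Hh, qmul_inv_cancel_r; auto.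
Qed.

Lemma dist_to_sigma_scale_r n x1 x2 g z : g <> qzero ->
  dist_to_sigma n x1 (qvscale g x2) z = dist_to_sigma n x1 x2 z.
Proof.
  intros Hg; unfold dist_to_sigma; f_equal; apply Glb_Rbar_eqset; intro r.
  split; intros [q [Hq E]]; exists q; split; auto; apply (in_sigma_scale_r n x1 x2 g); auto.
Qed.

Lemma nearest_in_Sigma_scale_r n x1 x2 g y p : g <> qzero ->
  nearest_in_Sigma n x1 (qvscale g x2) y p <-> nearest_in_Sigma n x1 x2 y p.
Proof.
  intros Hg; unfold nearest_in_Sigma; rewrite in_Sigma_scale_r by auto.
  split; intros [Hp Hmin]; split; auto; intros q Hq; apply Hmin;
    apply (in_Sigma_scale_r n x1 x2 g); auto.
Qed.

Lemma acos_re_norm_scale c T : 0 < c ->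
  acos (Rabs (qre (qmul (qofR c) T)) / sqrt (qnorm2 (qmul (qofR c) T))) =
  acos (Rabs (qre T) / sqrt (qnorm2 T)).
Proof.
  intro Hc; f_equal.
  replace (qre (qmul (qofR c) T)) with (c * qre T) by (qunfold; ring).
  replace (qnorm2 (qmul (qofR c) T)) with ((c * c) * qnorm2 T) by (qunfold; ring).
  rewrite Rabs_mult, (Rabs_pos_eq c), sqrt_mult_alt, sqrt_square by nra.
  destruct (Req_dec (sqrt (qnorm2 T)) 0) as [E|E].
  - rewrite E, Rmult_0_r; unfold Rdiv; rewrite Rinv_0, !Rmult_0_r; reflexivity.
  - field; split; lra.
Qed.

Lemma abs_tan_angleH_scale_r n x1 x2 x3 g : g <> qzero ->
  abs_tan_angleH n x1 (qvscale g x2) x3 = abs_tan_angleH n x1 x2 x3.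
Proof.
  intros Hg; unfold abs_tan_angleH, angleH.
  replace (triple n x1 (qvscale g x2) x3) with (qmul (qofR (qnorm2 g)) (triple n x1 x2 x3))
    by (unfold triple; rewrite herm_scale_r, herm_scale_l; qring).
  rewrite acos_re_norm_scale by (apply qnorm2_pos; auto); reflexivity.
Qed.

Lemma herm_neq0_of_not_same_line n x y :
  nullvec n x -> nullvec n y -> ~ same_line n x y -> herm n x y <> qzero.
Proof. intros Hx Hy Hxy E; apply Hxy, nullvec_orth_same_line; auto. Qed.

Lemma qmul_conj_normalize h : h <> qzero ->
  qmul h (qconj (qmul (qofR (- / qnorm2 h)) h)) = qofR (-1).
Proof. intros Hh; pose proof (qnorm2_pos h Hh); apply quat_ext; qunfold; field; lra. Qed.

Theorem theorem3p4 (n : nat) (x1 x2 x3 : qvec) :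
  (1 <= n)%nat ->
  nullvec n x1 -> nullvec n x2 -> nullvec n x3 ->
  ~ same_line n x1 x2 -> ~ same_line n x1 x3 -> ~ same_line n x2 x3 ->
  forall (y p : nat -> qvec),
    (forall k, negvec n (y k)) ->
    conv_to n y x3 ->
    (forall k, nearest_in_Sigma n x1 x2 (y k) (p k)) ->
    is_lim_seq (fun k => sinh (dist_to_sigma n x1 x2 (p k)))
               (abs_tan_angleH n x1 x2 x3).
Proof.
  intros _ N1 N2 N3 S12 S13 S23 y p Hy Hconv Hp.
  assert (H12 : herm n x1 x2 <> qzero) by (apply herm_neq0_of_not_same_line; auto).
  assert (H31 : herm n x3 x1 <> qzero)
    by (rewrite herm_sym; apply qconj_neq0, herm_neq0_of_not_same_line; auto).
  assert (H32 : herm n x3 x2 <> qzero)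
    by (rewrite herm_sym; apply qconj_neq0, herm_neq0_of_not_same_line; auto).
  (* rescale x2 so that <x1, x2> = -1 *)
  set (g := qmul (qofR (- / qnorm2 (herm n x1 x2))) (herm n x1 x2)).
  assert (Hg : g <> qzero).
  { apply qmul_neq0, H12; apply qofR_neq0, Ropp_neq_0_compat, Rinv_neq_0_compat.
    pose proof (qnorm2_pos _ H12); lra. }
  rewrite <- (abs_tan_angleH_scale_r n x1 x2 x3 g Hg).
  apply (is_lim_seq_ext (fun k => sinh (dist_to_sigma n x1 (qvscale g x2) (p k))));
    [intro k; rewrite dist_to_sigma_scale_r; auto|].
  apply is_lim_seq_sinh_dist_nearest with y; auto.
  - apply N1.
  - rewrite herm_scale_l, herm_scale_r, (proj2 N2); qring.
  - rewrite herm_scale_r; apply qmul_conj_normalize; auto.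
  - rewrite herm_scale_r; apply qmul_neq0, qconj_neq0; auto.
  - intro k; apply nearest_in_Sigma_scale_r; auto.
Qed.
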